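(* Consider the Variance-shifting Procedure described in the context, and suppose that in iteration $k$ the procedure reaches Step 2 (i.e. $\mathrm{Reroute}(\mathcal{A}_{k-1},\tau)$ was feasible with optimal solution $(\bar p^k,\bar f^k,\bar\theta^k)$). Let $(\bar f,\mathcal{A})$ be an arbitrary compatible pair. Then there exists $0<\gamma\le 1$ such that for all $0\le t\le\gamma$, the pair $$\bigl((1-t)\bar f^k+t\bar f,\;(1-t)\mathcal{A}_{k-1}+t\mathcal{A}\bigr)$$ is compatible.
   Context: Network (DC model): bus set $\mathcal{B}$, $n=|\mathcal{B}|$; line set $\mathcal{E}$, $m=|\mathcal{E}|$; each line $ij$ has susceptance $b_{ij}>0$ and limit $f^{\max}_{ij}>0$. $B$ is the $n\times n$ bus susceptance matrix; $\hat B$ is $B$ with last row and column removed (assumed invertible); $\breve B=\begin{pmatrix}\hat B^{-1}&0\\0&0\end{pmatrix}$ with $i$-th row $\breve B_i$; $\pi_{ij}=\breve B_i^T-\breve B_j^T$. $\mathcal{G}\subseteq\mathcal{B}$ is the set of generator buses, with limits $p_i^{\min}\le p_i^{\max}$ and costs $c_i(p)=c_{i0}p^2+c_{i1}p+c_{i2}$, $c_{i0}\ge 0$. $d\in\mathbb{R}^n$ are loads, $\mu\in\mathbb{R}^n$ mean stochastic injections, $\omega$ a zero-mean random vector with covariance $\Omega$. $\mathcal{K}$ is a given convex set of $n\times n$ participation matrices $\mathcal{A}$ (with rows $\mathcal{A}_i$). Safety parameters $\nu_{ij}\ge0$ (lines) and $\nu_i\ge0$ (generators) are given. For a matrix $\mathcal{A}$,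 $\mathbf{V}(\mathcal{A})\in\mathbb{R}^m$ has entries $\mathbf{V}(\mathcal{A})_{ij}=b_{ij}^2\pi_{ij}^T(I-\mathcal{A})\Omega(I-\mathcal{A}^T)\pi_{ij}$ (line flow variances). Compatibility: a pair $(\bar f,\mathcal{A})$ with $\bar f\in\mathbb{R}^m$ is compatible if $\mathcal{A}\in\mathcal{K}$ and there exist $\bar p\in\mathbb{R}^n$ (with $\bar p_i=0$ for $i\notin\mathcal{G}$) and $\bar\theta\in\mathbb{R}^n$ with $B\bar\theta=\bar p+\mu-d$; $\bar f_{ij}=b_{ij}(\bar\theta_i-\bar\theta_j)$ and $|\bar f_{ij}|+\nu_{ij}\sqrt{\mathbf{V}(\mathcal{A})_{ij}}\le f^{\max}_{ij}$ for all $ij\in\mathcal{E}$; and $p_i^{\min}+\nu_i\sqrt{\mathcal{A}_i^T\Omega\mathcal{A}_i}\le\bar p_i\le p_i^{\max}-\nu_i\sqrt{\mathcal{A}_i^T\Omega\mathcal{A}_i}$ for all $i\in\mathcal{G}$ (i.e. they extend to a feasible solution of the safety-constrained DC-OPF, whose objective is $\sum_{i\in\mathcal{G}}[c_{i0}(\bar p_i^2+\mathcal{A}_i^T\Omega\mathcal{A}_i)+c_{i1}\bar p_i+c_{i2}]$). Variance metric: for each line $ij$ a convex nondecreasing function $\Delta_{ij}:[0,\infty)\to[0,\infty)$, and for each flow vector $\bar f$ a set $\mathcal{F}(\bar f)\subseteq\mathcal{E}$ depending only on $\bar f$; $\Delta(\bar f,s^2)=\sum_{ij\in\mathcal{F}(\bar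 f)}\Delta_{ij}(s^2_{ij})$. Subproblems. For $\hat{\mathcal{A}}\in\mathcal{K}$ and $0<\tau<1$, $\mathrm{Reroute}(\hat{\mathcal{A}},\tau)$ is: minimize $\sum_{i\in\mathcal{G}}[c_{i0}(\bar p_i^2+\hat{\mathcal{A}}_i^T\Omega\hat{\mathcal{A}}_i)+c_{i1}\bar p_i+c_{i2}]$ over $\bar p,\bar f,\bar\theta$ subject to $B\bar\theta=\bar p+\mu-d$, $\bar f_{ij}=b_{ij}(\bar\theta_i-\bar\theta_j)$, $|\bar f_{ij}|+\nu_{ij}\sqrt{\mathbf{V}(\hat{\mathcal{A}})_{ij}}\le(1-\tau)f^{\max}_{ij}$ for all $ij\in\mathcal{E}$, and the generator constraints above with $\hat{\mathcal{A}}$. For $\bar f'$, $\mathcal{A}'$, let $\mathbf{T}(\bar f',\mathcal{A}',\tau)=\{ij\in\mathcal{E}:|\bar f'_{ij}|+\nu_{ij}\sqrt{\mathbf{V}(\mathcal{A}')_{ij}}\ge(1-\tau)f^{\max}_{ij}\}$. $\mathrm{VShift}(\bar f',\mathcal{A}',\tau)$ is: minimize $\sum_{ij\in\mathcal{F}(\bar f')}\Delta_{ij}(s_{ij}^2)$ over $s\in\mathbb{R}^m_{\ge0}$, $\mathcal{A}$ subject to $\mathcal{A}\in\mathcal{K}$, $s_{ij}^2\ge\mathbf{V}(\mathcal{A})_{ij}$ for all $ij\in\mathcal{E}$, and $|\bar f'_{ij}|+\nu_{ij}s_{ij}\le f^{\max}_{ij}$ for $ij\in\mathbf{T}(\bar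 f',\mathcal{A}',\tau)$. Variance-shifting Procedure. Input: a feasible solution $(\bar p^0,\bar f^0,\mathcal{A}_0)$ of the safety-constrained problem (so $(\bar f^0,\mathcal{A}_0)$ is compatible), the metric $\Delta$, $0<\tau<1$, and an iteration bound $N\ge1$; set $s^2_0=\mathbf{V}(\mathcal{A}_0)$. For $k=1,\dots,N$: (1) solve $\mathrm{Reroute}(\mathcal{A}_{k-1},\tau)$; if infeasible, stop; else let $(\bar p^k,\bar f^k,\bar\theta^k)$ be an optimal solution. (2) Solve $\mathrm{VShift}(\bar f^k,\mathcal{A}_{k-1},\tau)$, with optimal solution $(\hat s_k,\hat{\mathcal{A}}_k)$. (3) Choose the largest $\lambda\in(0,1]$ such that $(\bar f^k,(1-\lambda)\mathcal{A}_{k-1}+\lambda\hat{\mathcal{A}}_k)$ is compatible. (4) Set $\mathcal{A}_k=(1-\lambda)\mathcal{A}_{k-1}+\lambda\hat{\mathcal{A}}_k$ and $s^2_k=\mathbf{V}(\mathcal{A}_k)$. (5) If $\Delta(\bar f^k,s^2_k)\ge\Delta(\bar f^{k-1},s^2_{k-1})$, stop; otherwise reset $\tau\leftarrow\tau/2$ and continue. *)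

From HB Require Import structures.
From mathcomp Require Import all_boot all_order all_algebra.
From mathcomp Require Import reals.
Set Implicit Arguments. Unset Strict Implicit. Unset Printing Implicit Defensive.
Import Order.TTheory GRing.Theory Num.Theory.
Local Open Scope ring_scope.

(* Network data: buses are 'I_n.+1 (the last bus is ord_max, whose row/column
   is removed in hat B), lines are 'I_m, line l goes from bus [lfrom l] to
   bus [lto l]. *)
Record Net (R : realType) (n m : nat) := MkNet {
  lfrom : 'I_m -> 'I_n.+1;
  lto : 'I_m -> 'I_n.+1;
  susc : 'I_m -> R;
  fmax : 'I_m -> R;
  gen : 'I_n.+1 -> bool;
  pmin : 'I_n.+1 -> R;
  pmax : 'I_n.+1 -> R;
  c0 : 'I_n.+1 -> R;
  c1 : 'I_n.+1 -> R;
  c2 : 'I_n.+1 -> R;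
  load : 'cV[R]_n.+1;
  mu : 'cV[R]_n.+1;
  Omega : 'M[R]_n.+1;
  Kset : 'M[R]_n.+1 -> Prop;
  nu_line : 'I_m -> R;
  nu_gen : 'I_n.+1 -> R
}.

Section Defs.
Variables (R : realType) (n m : nat) (net : Net R n m).

Definition Bmat : 'M[R]_n.+1 :=
  \matrix_(i, j)
    if i == j then \sum_(l | (lfrom net l == i) || (lto net l == i)) susc net l
    else - \sum_(l | ((lfrom net l == i) && (lto net l == j))
                     || ((lfrom net l == j) && (lto net l == i))) susc net l.

Definition Bhat : 'M[R]_n :=
  \matrix_(i, j) Bmat (lift ord_max i) (lift ord_max j).

Definition Bbreve : 'M[R]_n.+1 :=
  \matrix_(i, j)
    match unlift ord_max i, unlift ord_max j with
    | Some i', Some j' => invmx Bhat i' j'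
    | _, _ => 0
    end.

Definition piv (l : 'I_m) : 'cV[R]_n.+1 :=
  (row (lfrom net l) Bbreve - row (lto net l) Bbreve)^T.

Definition Vvar (A : 'M[R]_n.+1) (l : 'I_m) : R :=
  susc net l ^+ 2 *
  ((piv l)^T *m (1%:M - A) *m Omega net *m (1%:M - A^T) *m piv l) 0 0.

Definition gvar (A : 'M[R]_n.+1) (i : 'I_n.+1) : R :=
  (row i A *m Omega net *m (row i A)^T) 0 0.

Definition cost (A : 'M[R]_n.+1) (p : 'cV[R]_n.+1) : R :=
  \sum_(i | gen net i)
     (c0 net i * (p i 0 ^+ 2 + gvar A i) + c1 net i * p i 0 + c2 net i).

Definition PowerFlow (p : 'cV[R]_n.+1) (f : 'I_m -> R) (th : 'cV[R]_n.+1) :=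
  [/\ (forall i, ~~ gen net i -> p i 0 = 0),
      Bmat *m th = p + mu net - load net &
      (forall l, f l = susc net l * (th (lfrom net l) 0 - th (lto net l) 0))].

Definition GenLimits (A : 'M[R]_n.+1) (p : 'cV[R]_n.+1) :=
  forall i, gen net i ->
    pmin net i + nu_gen net i * Num.sqrt (gvar A i) <= p i 0 /\
    p i 0 <= pmax net i - nu_gen net i * Num.sqrt (gvar A i).

Definition SafetyFeasible (p : 'cV[R]_n.+1) (f : 'I_m -> R) (th : 'cV[R]_n.+1)
    (A : 'M[R]_n.+1) :=
  [/\ Kset net A, PowerFlow p f th,
      (forall l, `|f l| + nu_line net l * Num.sqrt (Vvar A l) <= fmax net l) &
      GenLimits A p].

Definition Compatible (f : 'I_m -> R) (A : 'M[R]_n.+1) :=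
  exists p th, SafetyFeasible p f th A.

Definition RerouteFeas (Ah : 'M[R]_n.+1) (tau : R)
    (p : 'cV[R]_n.+1) (f : 'I_m -> R) (th : 'cV[R]_n.+1) :=
  [/\ PowerFlow p f th,
      (forall l, `|f l| + nu_line net l * Num.sqrt (Vvar Ah l)
                   <= (1 - tau) * fmax net l) &
      GenLimits Ah p].

Definition RerouteOpt (Ah : 'M[R]_n.+1) (tau : R)
    (p : 'cV[R]_n.+1) (f : 'I_m -> R) (th : 'cV[R]_n.+1) :=
  RerouteFeas Ah tau p f th /\
  forall p' f' th', RerouteFeas Ah tau p' f' th' -> cost Ah p <= cost Ah p'.

Definition Tset (f' : 'I_m -> R) (A' : 'M[R]_n.+1) (tau : R) (l : 'I_m) : Prop :=
  (1 - tau) * fmax net l <= `|f' l| + nu_line net l * Num.sqrt (Vvar A' l).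

Section Metric.
Variables (Dl : 'I_m -> R -> R) (Fset : ('I_m -> R) -> 'I_m -> bool).

Definition Delta (f : 'I_m -> R) (s2 : 'I_m -> R) : R :=
  \sum_(l | Fset f l) Dl l (s2 l).

Definition VShiftFeas (f' : 'I_m -> R) (A' : 'M[R]_n.+1) (tau : R)
    (s : 'I_m -> R) (A : 'M[R]_n.+1) :=
  [/\ (forall l, 0 <= s l), Kset net A,
      (forall l, Vvar A l <= s l ^+ 2) &
      (forall l, Tset f' A' tau l -> `|f' l| + nu_line net l * s l <= fmax net l)].

Definition VShiftOpt (f' : 'I_m -> R) (A' : 'M[R]_n.+1) (tau : R)
    (s : 'I_m -> R) (A : 'M[R]_n.+1) :=
  VShiftFeas f' A' tau s A /\
  forall s1 A1, VShiftFeas f' A' tau s1 A1 ->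
    Delta f' (fun l => s l ^+ 2) <= Delta f' (fun l => s1 l ^+ 2).

Definition LargestLambda (f : 'I_m -> R) (A Ah : 'M[R]_n.+1) (lam : R) :=
  [/\ 0 < lam <= 1, Compatible f ((1 - lam) *: A + lam *: Ah) &
      forall lam', 0 < lam' <= 1 ->
        Compatible f ((1 - lam') *: A + lam' *: Ah) -> lam' <= lam].

Variables (N : nat) (f0 : 'I_m -> R) (A0 : 'M[R]_n.+1) (tau0 : R).

(* [Reached k A tau fprev]: the procedure (started from (f0, A0), tau0, with
   iteration bound N) reaches the beginning of iteration k with
   A_{k-1} = A, current tau, and f^{k-1} = fprev. *)
Inductive Reached : nat -> 'M[R]_n.+1 -> R -> ('I_m -> R) -> Prop :=
| Reached_init : (1 <= N)%N -> Reached 1 A0 tau0 f0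
| Reached_step k A tau fprev p f th s Ah lam :
    Reached k A tau fprev ->
    RerouteOpt A tau p f th ->
    VShiftOpt f A tau s Ah ->
    LargestLambda f A Ah lam ->
    Delta f (Vvar ((1 - lam) *: A + lam *: Ah)) < Delta fprev (Vvar A) ->
    (k < N)%N ->
    Reached k.+1 ((1 - lam) *: A + lam *: Ah) (tau / 2) f.

End Metric.

Definition NetWF : Prop :=
  [/\ ((forall l, 0 < susc net l) /\ (forall l, 0 < fmax net l)),
      ((forall l, lfrom net l != lto net l) /\ Bhat \in unitmx),
      ((forall i, gen net i -> pmin net i <= pmax net i /\ 0 <= c0 net i) /\
       (forall l, 0 <= nu_line net l) /\ (forall i, 0 <= nu_gen net i)),
      (Omega net)^T = Omega net /\
        (forall x : 'cV[R]_n.+1, 0 <= (x^T *m Omega net *m x) 0 0) &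
      (forall A B (t : R), Kset net A -> Kset net B -> 0 <= t <= 1 ->
         Kset net ((1 - t) *: A + t *: B))].

End Defs.

Definition MetricWF (R : realType) (m : nat) (Dl : 'I_m -> R -> R) : Prop :=
  forall l,
    (forall x, 0 <= x -> 0 <= Dl l x) /\
    (forall x y, 0 <= x -> x <= y -> Dl l x <= Dl l y) /\
    (forall x y t, 0 <= x -> 0 <= y -> 0 <= t <= 1 ->
       Dl l ((1 - t) * x + t * y) <= (1 - t) * Dl l x + t * Dl l y).

(** The set of compatible pairs is convex, so gamma = 1 works.  The flow
equations are affine in (p, f, theta), K is convex, and the safety margins
sqrt(V(A)_ij) and sqrt(A_i^T Omega A_i) are seminorms sqrt(x Omega x^T) of
affine functions of A, hence convex in A: this is Cauchy-Schwarz for the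
positive semidefinite form Omega.  The optimum of Reroute(A_{k-1}, tau) is
itself compatible with A_{k-1}, because Reroute imposes the line limits
(1 - tau) f^max <= f^max, and A_{k-1} lies in K along every run. *)

From HB Require Import structures.
From mathcomp Require Import all_boot all_order all_algebra.
From mathcomp Require Import reals ring lra.
Import Order.TTheory GRing.Theory Num.Theory.
Local Open Scope ring_scope.
Set Implicit Arguments. Unset Strict Implicit.

Section QuadraticForm.
Variables (R : rcfType) (k : nat) (Om : 'M[R]_k).

Definition qform (r : 'rV[R]_k) : R := (r *m Om *m r^T) 0 0.
Definition bform (r s : 'rV[R]_k) : R := (r *m Om *m s^T) 0 0.

Lemma qformDZ (a b : R) (r s : 'rV[R]_k) :
  qform (a *: r + b *: s) =
  a ^+ 2 * qform r + a * b * (bform r s + bform s r) + b ^+ 2 * qform s.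
Proof.
rewrite /qform /bform linearD /= !linearZ /= !mulmxDl !mulmxDr.
by rewrite -!scalemxAl -!scalemxAr !mxE; ring.
Qed.

Hypothesis Om_psd : forall x : 'cV[R]_k, 0 <= (x^T *m Om *m x) 0 0.

Lemma qform_ge0 r : 0 <= qform r.
Proof. by have := Om_psd r^T; rewrite trmxK. Qed.

(* Omega need not be symmetric: only its symmetric part enters [qform], hence
the polarisation [bform r s + bform s r].  The witnesses minimise the
quadratic a |-> qform (a *: r + s) when [qform r > 0]; otherwise that map is
affine and cannot change sign. *)
Lemma bform_CauchySchwarz r s :
  (bform r s + bform s r) ^+ 2 <= 4 * qform r * qform s.
Proof.
set P := bform r s + bform s r; have Qs_ge0 := qform_ge0 s.
have [Qr0|Qr_gt0] := eqVneq (qform r) 0.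
- have := qform_ge0 ((- (qform s + 1)) *: r + P *: s).
  rewrite qformDZ -/P Qr0; nra.
- have := qform_ge0 ((- P) *: r + (2 * qform r) *: s).
  rewrite qformDZ -/P.
  have : 0 < qform r by rewrite lt_neqAle eq_sym Qr_gt0 qform_ge0.
  nra.
Qed.

Lemma sqrt_qformDZ_le (a b : R) r s : 0 <= a -> 0 <= b ->
  Num.sqrt (qform (a *: r + b *: s)) <=
  a * Num.sqrt (qform r) + b * Num.sqrt (qform s).
Proof.
move=> a_ge0 b_ge0.
have [Qr_ge0 Qs_ge0] := (qform_ge0 r, qform_ge0 s).
set x := Num.sqrt (qform r); set y := Num.sqrt (qform s).
have [x_ge0 y_ge0] : 0 <= x /\ 0 <= y by rewrite !sqrtr_ge0.
have polar_le : bform r s + bform s r <= 2 * (x * y).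
  rewrite (le_trans (ler_norm _)) // -sqrtr_sqr.
  apply: le_trans (ler_wsqrtr (bform_CauchySchwarz r s)) _.
  have -> : 4 * qform r * qform s = (2 * (x * y)) ^+ 2.
    by rewrite -(sqr_sqrtr Qr_ge0) -(sqr_sqrtr Qs_ge0) -/x -/y; ring.
  by rewrite sqrtr_sqr ger0_norm ?mulr_ge0.
rewrite -(ger0_norm (_ : 0 <= a * x + b * y)) ?addr_ge0 ?mulr_ge0 //.
rewrite -sqrtr_sqr ler_wsqrtr // qformDZ.
rewrite -(sqr_sqrtr Qr_ge0) -(sqr_sqrtr Qs_ge0) -/x -/y.
have := ler_wpM2l (mulr_ge0 a_ge0 b_ge0) polar_le; nra.
Qed.

End QuadraticForm.

Lemma ler_convex_comb (R : numDomainType) (t x x' y y' : R) : 0 <= t <= 1 ->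
  x <= x' -> y <= y' -> (1 - t) * x + t * y <= (1 - t) * x' + t * y'.
Proof.
move=> /andP[t_ge0 t_le1] le_x le_y.
by rewrite lerD // ler_wpM2l // subr_ge0.
Qed.

Lemma subr_convex_comb (R : pzRingType) (V : lmodType R) (t : R) (x a b : V) :
  x - ((1 - t) *: a + t *: b) = (1 - t) *: (x - a) + t *: (x - b).
Proof. by rewrite !scalerBr addrACA -scalerDl subrK scale1r opprD. Qed.

Section Network.
Variables (R : realType) (n m : nat) (net : Net R n m).

Lemma Reached_Kset_tau_gt0 Dl Fset N f0 A0 tau0 k A tau fprev :
  Kset net A0 -> 0 < tau0 ->
  Reached net Dl Fset N f0 A0 tau0 k A tau fprev -> Kset net A /\ 0 < tau.
Proof.
move=> K_A0 tau0_gt0; elim=> // {}k {}A {}tau {}fprev ? ? ? ? ? ? _ [_ tau_gt0].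
move=> _ _ [_ [? [? [K_comb _ _ _]]] _] _ _.
by split=> //; apply: divr_gt0.
Qed.

Lemma RerouteFeas_SafetyFeasible A tau p f th :
  (forall l, 0 <= fmax net l) -> Kset net A -> 0 <= tau ->
  RerouteFeas net A tau p f th -> SafetyFeasible net p f th A.
Proof.
move=> fmax_ge0 K_A tau_ge0 [flow line_lim gen_lim]; split=> // l.
by apply: le_trans (line_lim l) _; have := fmax_ge0 l; nra.
Qed.

Lemma PowerFlow_affine t p f th p' f' th' :
  PowerFlow net p f th -> PowerFlow net p' f' th' ->
  PowerFlow net ((1 - t) *: p + t *: p') (fun l => (1 - t) * f l + t * f' l)
    ((1 - t) *: th + t *: th').
Proof.
move=> [p_gen B_th f_th] [p_gen' B_th' f_th']; split.
- by move=> i gi; rewrite !mxE p_gen // p_gen' // !mulr0 addr0.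
- rewrite mulmxDr !linearZ /= B_th B_th'.
  by apply/matrixP=> i j; rewrite !mxE; ring.
- by move=> l; rewrite f_th f_th' !mxE; ring.
Qed.

Lemma Vvar_qform A l :
  Vvar net A l =
  susc net l ^+ 2 * qform (Omega net) ((piv net l)^T *m (1%:M - A)).
Proof.
rewrite /Vvar /qform trmx_mul trmxK [(1%:M - A)^T]linearB /= trmx1.
by rewrite !mulmxA.
Qed.

Hypothesis Omega_psd : forall x : 'cV[R]_n.+1, 0 <= (x^T *m Omega net *m x) 0 0.

Lemma sqrt_Vvar_convex t (A B : 'M[R]_n.+1) l : 0 <= t <= 1 ->
  Num.sqrt (Vvar net ((1 - t) *: A + t *: B) l) <=
  (1 - t) * Num.sqrt (Vvar net A l) + t * Num.sqrt (Vvar net B l).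
Proof.
move=> /andP[t_ge0 t_le1].
rewrite !Vvar_qform subr_convex_comb (mulmxDr _ ((1 - t) *: _)) -!scalemxAr.
rewrite !(sqrtrM _ (sqr_ge0 (susc net l))).
rewrite mulrCA [t * _]mulrCA -mulrDr ler_wpM2l ?sqrtr_ge0 //.
by rewrite sqrt_qformDZ_le ?subr_ge0.
Qed.

Lemma sqrt_gvar_convex t (A B : 'M[R]_n.+1) i : 0 <= t <= 1 ->
  Num.sqrt (gvar net ((1 - t) *: A + t *: B) i) <=
  (1 - t) * Num.sqrt (gvar net A i) + t * Num.sqrt (gvar net B i).
Proof.
move=> /andP[t_ge0 t_le1].
by rewrite /gvar linearD !linearZ sqrt_qformDZ_le ?subr_ge0.
Qed.

Hypotheses (nu_line_ge0 : forall l, 0 <= nu_line net l)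
           (nu_gen_ge0 : forall i, 0 <= nu_gen net i).
Hypothesis Kset_convex : forall A B (t : R), Kset net A -> Kset net B ->
  0 <= t <= 1 -> Kset net ((1 - t) *: A + t *: B).

Lemma SafetyFeasible_convex t p f th A p' f' th' A' : 0 <= t <= 1 ->
  SafetyFeasible net p f th A -> SafetyFeasible net p' f' th' A' ->
  SafetyFeasible net ((1 - t) *: p + t *: p')
    (fun l => (1 - t) * f l + t * f' l)
    ((1 - t) *: th + t *: th') ((1 - t) *: A + t *: A').
Proof.
move=> t01 [K_A flow line_lim gen_lim] [K_A' flow' line_lim' gen_lim'].
have /andP[t_ge0 t_le1] := t01; have t'_ge0 : 0 <= 1 - t by rewrite subr_ge0.
split; first exact: Kset_convex.
- exact: PowerFlow_affine.
- move=> l.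
  have norm_le : `|(1 - t) * f l + t * f' l| <= (1 - t) * `|f l| + t * `|f' l|.
    apply: le_trans (ler_normD _ _) _.
    by rewrite !normrM (ger0_norm t_ge0) (ger0_norm t'_ge0).
  have sd_le := ler_wpM2l (nu_line_ge0 l) (sqrt_Vvar_convex A A' l t01).
  apply: le_trans (lerD norm_le sd_le) _.
  by have := ler_convex_comb t01 (line_lim l) (line_lim' l); lra.
- move=> i gi; rewrite !mxE.
  have sd_le := ler_wpM2l (nu_gen_ge0 i) (sqrt_gvar_convex A A' i t01).
  have [lo_le le_hi] := gen_lim i gi; have [lo_le' le_hi'] := gen_lim' i gi.
  have := ler_convex_comb t01 lo_le lo_le'.
  have := ler_convex_comb t01 le_hi le_hi'.
  by split; lra.
Qed.

End Network.

Unset Implicit Arguments.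
Theorem lemma5 (R : realType) (n m N : nat) (net : Net R n m)
    (Dl : 'I_m -> R -> R) (Fset : ('I_m -> R) -> 'I_m -> bool)
    (p0 : 'cV[R]_n.+1) (f0 : 'I_m -> R) (th0 : 'cV[R]_n.+1) (A0 : 'M[R]_n.+1)
    (tau0 : R)
    (k : nat) (Akm1 : 'M[R]_n.+1) (tau : R) (fprev : 'I_m -> R)
    (pk : 'cV[R]_n.+1) (fk : 'I_m -> R) (thk : 'cV[R]_n.+1)
    (fbar : 'I_m -> R) (Abar : 'M[R]_n.+1) :
  NetWF net -> MetricWF Dl ->
  0 < tau0 < 1 ->
  SafetyFeasible net p0 f0 th0 A0 ->
  Reached net Dl Fset N f0 A0 tau0 k Akm1 tau fprev ->
  RerouteOpt net Akm1 tau pk fk thk ->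
  Compatible net fbar Abar ->
  exists gamma : R, 0 < gamma <= 1 /\
    forall t : R, 0 <= t <= gamma ->
      Compatible net (fun l => (1 - t) * fk l + t * fbar l)
                     ((1 - t) *: Akm1 + t *: Abar).
Proof.
move=> [[_ fmax_gt0] _ [_ [nu_line_ge0 nu_gen_ge0]] [_ Omega_psd] K_convex] _.
move=> /andP[tau0_gt0 _] [K_A0 _ _ _] reached [reroute _] [pb [thb feas_bar]].
have [K_A tau_gt0] := Reached_Kset_tau_gt0 K_A0 tau0_gt0 reached.
have feas_k := RerouteFeas_SafetyFeasible (fun l => ltW (fmax_gt0 l)) K_A
  (ltW tau_gt0) reroute.
exists 1; split=> [|t t01]; first by rewrite ltr01 lexx.
by do 2 eexists; apply: SafetyFeasible_convex feas_k feas_bar.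
Qed.
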